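(* Let $m\ge1$, $n\ge1$, $N>2n$, and let $\mathbf y$ be a stationary reciprocal process of order $n$ on $\mathbb Z_N$ with conjugate process $\mathbf d(t)=\mathbf y(t)-\hat{\mathbb E}[\mathbf y(t)\mid\mathbf y(s),s\ne t]$. Then there exist constant matrices $F_{-n},\dots,F_{-1},F_1,\dots,F_n\in\mathbb R^{m\times m}$ such that, with $F_0=I_m$, $$\sum_{k=-n}^{n}F_k\,\mathbf y(t-k)=\mathbf d(t),\qquad t=1,\dots,N,$$ where the values outside $[1,N]$ are given by the cyclic boundary conditions $\mathbf y(k)=\mathbf y(N+k)$, $k=-n+1,\dots,n$. Equivalently, $\mathbf F_N\mathbf y=\mathbf d$, where $\mathbf F_N$ is the $mN\times mN$ banded block-circulant matrix whose first block column is $(I_m,F_1,\dots,F_n,0,\dots,0,F_{-n},\dots,F_{-1})$. If $\mathbf y$ is full rank, this description is unique.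
   Context: A process on $\mathbb Z_N$ is a zero-mean second-order $\mathbb R^m$-valued process $\{\mathbf y(t)\}_{t=1}^N$, time indices taken modulo $N$, whose covariance $\boldsymbol\Sigma_N=\mathbb E\,\mathbf y\mathbf y^\top$ is symmetric block-circulant (its $(i,j)$ block depends only on $(i-j)\bmod N$, so the block-circulant matrix is determined by its first block column); such a process is stationary. Full rank means $\boldsymbol\Sigma_N>0$. $\hat{\mathbb E}[\cdot\mid\cdot]$ is orthogonal projection onto the closed linear span of the scalar components of the conditioning variables. Subspaces $\mathcal A,\mathcal B$ are conditionally orthogonal given $\mathcal C$ if $a-\hat{\mathbb E}[a\mid\mathcal C]$ and $b-\hat{\mathbb E}[b\mid\mathcal C]$ are uncorrelated for all $a\in\mathcal A,b\in\mathcal B$. The process is reciprocal of order $n$ if for every cyclic interval $(t_1,t_2)$ the variables $\{\mathbf y(t):t\in(t_1,t_2)\}$ are conditionally orthogonal to $\{\mathbf y(s):s\notin(t_1,t_2)\}$ given $\mathbf y(t_1-n+1),\dots,\mathbf y(t_1),\mathbf y(t_2),\dots,\mathbf y(t_2+n-1)$. *)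

From HB Require Import structures.
From mathcomp Require Import all_boot all_order all_algebra.
From mathcomp Require Import all_classical all_reals all_analysis.
Set Implicit Arguments. Unset Strict Implicit. Unset Printing Implicit Defensive.
Import Order.TTheory GRing.Theory Num.Theory.
Local Open Scope ring_scope.

Section ReciprocalDefs.
Context {d0 : measure_display} {T : measurableType d0} {R : realType}.
Variable P : probability T R.

Definition rp_inner (X Y : T -> R) : R := fine ('E_P[X \* Y])%E.

Definition rp_lincomb (S : seq (T -> R)) (c : 'I_(size S) -> R) : T -> R :=
  fun w => \sum_(i < size S) c i * nth (fun _ => 0) S i w.

(* p belongs to the (finite-dimensional, hence closed) linear span of S
   (as an element of L^2, i.e. up to P-a.s. equality) *)
Definition rp_in_span (S : seq (T -> R)) (p : T -> R) : Prop :=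
  exists c : 'I_(size S) -> R, {ae P, forall w, p w = rp_lincomb c w}.

(* p is (a version of) the orthogonal projection  \hat E[x | S] *)
Definition rp_is_proj (S : seq (T -> R)) (x p : T -> R) : Prop :=
  rp_in_span S p /\
  forall i : 'I_(size S), rp_inner (x \- p) (nth (fun _ => 0) S i) = 0.

Definition rp_cond_orth (A B C : seq (T -> R)) : Prop :=
  forall (a : 'I_(size A) -> R) (b : 'I_(size B) -> R) (pa pb : T -> R),
    rp_is_proj C (rp_lincomb a) pa -> rp_is_proj C (rp_lincomb b) pb ->
    rp_inner (rp_lincomb a \- pa) (rp_lincomb b \- pb) = 0.

Variable m : nat.

Definition rp_comp (Y : T -> 'cV[R]_m) (i : 'I_m) : T -> R := fun w => Y w i 0.

Definition rp_comps (y : int -> T -> 'cV[R]_m) (ts : seq int) : seq (T -> R) :=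
  [seq rp_comp (y t) i | t <- ts, i <- enum 'I_m].

Definition rp_second_order (y : int -> T -> 'cV[R]_m) : Prop :=
  forall (t : int) (i : 'I_m),
    rp_comp (y t) i \in Lfun P 2%:E /\ ('E_P[rp_comp (y t) i] = 0)%E.

(* process on Z_N, represented as an N-rp_periodic process on Z
   (cyclic boundary conditions) *)
Definition rp_periodic (N : nat) (y : int -> T -> 'cV[R]_m) : Prop :=
  forall t : int, y (t + N%:Z) = y t.

Definition rp_Cov (y : int -> T -> 'cV[R]_m) (t s : int) : 'M[R]_m :=
  \matrix_(a, b) rp_inner (rp_comp (y t) a) (rp_comp (y s) b).

(* the covariance Sigma_N of (y(1),...,y(N)) is block-circulant *)
Definition rp_stationary (y : int -> T -> 'cV[R]_m) : Prop :=
  forall t s h : int, rp_Cov y (t + h) (s + h) = rp_Cov y t s.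

Definition rp_SigmaN (N : nat) (y : int -> T -> 'cV[R]_m) :
    'M[R]_(\sum_(i < N) m) :=
  \mxblock_(i < N, j < N) rp_Cov y (i.+1)%:Z (j.+1)%:Z.

(* rp_reciprocal of order n: for every cyclic interval (t1,t2), t2 = t1+L+1,
   interior {t1+1,..,t1+L}, exterior {t2,..,t1+N}, boundary
   {t1-n+1,..,t1} u {t2,..,t2+n-1} *)
Definition rp_reciprocal (n N : nat) (y : int -> T -> 'cV[R]_m) : Prop :=
  forall (t1 : int) (L : nat), (L.+1 < N)%N ->
    rp_cond_orth
      (rp_comps y [seq t1 + (i.+1)%:Z | i <- iota 0 L])
      (rp_comps y [seq t1 + (L.+1 + i)%:Z | i <- iota 0 (N - L)])
      (rp_comps y ([seq t1 - i%:Z | i <- iota 0 n] ++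
                [seq t1 + (L.+1 + i)%:Z | i <- iota 0 n])).

Definition rp_conjugate (N : nat) (y d : int -> T -> 'cV[R]_m) : Prop :=
  forall (t : int) (i : 'I_m),
    rp_is_proj (rp_comps y [seq t + (j.+1)%:Z | j <- iota 0 N.-1])
      (rp_comp (y t) i) (rp_comp (y t) i \- rp_comp (d t) i).

Definition two_sided_AR (n N : nat) (y d : int -> T -> 'cV[R]_m)
    (F : int -> 'M[R]_m) : Prop :=
  forall t : int, 1 <= t <= N%:Z ->
    {ae P, forall w,
      \sum_(k < (2 * n).+1) F (k%:Z - n%:Z) *m y (t - (k%:Z - n%:Z)) w
      = d t w}.

End ReciprocalDefs.

Definition rp_posdef {R : realType} (k : nat) (A : 'M[R]_k) : Prop :=
  forall x : 'rV[R]_k, x != 0 -> 0 < (x *m A *m x^T) 0 0.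

From HB Require Import structures.
From mathcomp Require Import all_boot all_order all_algebra.
From mathcomp Require Import all_classical all_reals all_analysis.
From mathcomp Require Import ring lra zify.
Import Order.TTheory GRing.Theory Num.Theory.
Local Open Scope ring_scope.

(* Write B(t) for the boundary {t - n, ..., t - 1, t + 1, ..., t + n}.  Applied to
   the cyclic interval (t - 1, t + 1), reciprocity makes the residual of y(t)
   given B(t) orthogonal to every y(s), s <> t: it is orthogonal to B(t) by
   construction, and to the exterior by conditional orthogonality.  Hence
   y(t) - d(t) = E[y(t) | B(t)], and by stationarity the regression
   coefficients on B(t) do not depend on t; they are the -F_k.  For
   uniqueness, the equations at t = 1 of two descriptions differ by a
   combination of the y(1 - k), |k| <= n, which vanishes a.s.; its variance
   is a quadratic form in Sigma_N, so when Sigma_N > 0 the coefficients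
   agree. *)

Lemma submx_of_ker (F : fieldType) (r k : nat) (G : 'M[F]_(r, k)) (b : 'rV[F]_k) :
  (forall v : 'cV_k, G *m v = 0 -> b *m v = 0) -> (b <= G)%MS.
Proof.
move=> Gb; rewrite submxE; apply/eqP/matrixP => i j.
have := Gb (col j (cokermx G)); rewrite colE mulmxA mulmx_coker mul0mx => /(_ erefl).
by rewrite mulmxA -colE => /(congr1 (fun M : 'M[F]_1 => M i 0)); rewrite !mxE.
Qed.

Section L2_inner.
Context {d0 : measure_display} {T : measurableType d0} {R : realType}.
Variable P : probability T R.
Local Open Scope classical_set_scope.
Local Notation L2 := (Lfun P 2%:E).
Local Notation nth0 S i := (nth (fun _ => 0) S i).
Import HBNNSimple.

(* Neither function needs to be measurable: the integral of a non-negative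
   function is the supremum over the simple functions below it. *)
Lemma ge0_integral_ae_le (F G : T -> \bar R) :
  (forall x, 0 <= F x)%E -> (forall x, 0 <= G x)%E ->
  {ae P, forall x, F x = G x} -> (\int[P]_x F x <= \int[P]_x G x)%E.
Proof.
move=> F0 G0 [N [mN PN NFG]].
rewrite (ge0_integralTE _ F0) (ge0_integralTE _ G0) /=.
apply: ge_ereal_sup => _ [h hF <-].
pose hN := mul_nnsfun h (indic_nnsfun R (measurableC mN)).
apply: (@le_trans _ _ (sintegral P hN)).
  rewrite -!integralT_nnsfun le_eqVlt; apply/orP; left; apply/eqP.
  apply: ae_eq_integral => //.
  - by apply/measurable_realfun.measurable_EFinP; exact: measurable_funP.
  - by apply/measurable_realfun.measurable_EFinP; exact: measurable_funP.
  exists N; split => // x /= hx; apply: contra_notP hx => Nx _.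
  by rewrite measurable_realfun.mindicE mem_set // mulr1.
apply: ereal_sup_ubound; exists hN => //= x.
rewrite /= measurable_realfun.mindicE.
case: (boolP (x \in ~` N)) => xN; last by rewrite mulr0 G0.
rewrite mulr1 (le_trans (hF x)) //.
by have -> : F x = G x by apply: contra_notP (set_mem xN) => ne; exact: NFG.
Qed.

Lemma ae_eq_expectation (f g : T -> R) :
  {ae P, forall w, f w = g w} -> ('E_P[f] = 'E_P[g])%E.
Proof.
move=> fg; rewrite unlock integralE [RHS]integralE.
congr (_ - _)%E; apply/eqP; rewrite eq_le; apply/andP; split;
  apply: ge0_integral_ae_le => //; try (by move=> x; exact: funepos_ge0);
  try (by move=> x; exact: funeneg_ge0);
  by apply: filterS fg => w /= fgw; rewrite ?funeposE ?funenegE /= fgw.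
Qed.

Lemma rp_innerC X Y : rp_inner P X Y = rp_inner P Y X.
Proof. by rewrite /rp_inner; congr (fine 'E_P[_])%E; apply/funext => w; exact: mulrC. Qed.

Lemma rp_inner_ae X X' Y :
  {ae P, forall w, X w = X' w} -> rp_inner P X Y = rp_inner P X' Y.
Proof.
move=> XX'; rewrite /rp_inner (@ae_eq_expectation (X \* Y) (X' \* Y)) //.
by apply: filterS XX' => w /= ->.
Qed.

Lemma rp_inner0l Y : rp_inner P (fun _ => 0) Y = 0.
Proof.
rewrite /rp_inner (_ : (fun _ => 0) \* Y = cst 0) ?expectation_cst //.
by apply/funext => w /=; rewrite mul0r.
Qed.

Lemma Lfun2_0 : (fun _ : T => 0 : R) \in L2.
Proof. exact: Lfun_cst. Qed.

Lemma Lfun2_lin a X Z : X \in L2 -> Z \in L2 -> (fun w => a * X w + Z w) \in L2.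
Proof.
move=> X2 Z2; rewrite (_ : (fun w => _) = (a \o* X) + Z); last first.
  by apply/funext => w; rewrite addrfctE /= mulrC.
have aX2 : a \o* X \in L2 by apply: Lfun_scale => //; rewrite ler1n.
by rewrite rpredD //; exact: lee1n.
Qed.

Lemma Lfun2_sub X Z : X \in L2 -> Z \in L2 -> X \- Z \in L2.
Proof.
move=> X2 Z2; rewrite (_ : X \- Z = (fun w => -1 * Z w + X w)); last first.
  by apply/funext => w /=; rewrite mulN1r addrC.
exact: Lfun2_lin.
Qed.

Lemma Lfun2_sum (I : Type) (r : seq I) (a : I -> R) (F : I -> T -> R) :
  (forall i, F i \in L2) -> (fun w => \sum_(i <- r) a i * F i w) \in L2.
Proof.
move=> F2; elim: r => [|i r IH]; first by under eq_fun do rewrite big_nil; exact: Lfun2_0.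
by under eq_fun do rewrite big_cons; exact: Lfun2_lin.
Qed.

Lemma rp_innerDl a X Z Y : X \in L2 -> Z \in L2 -> Y \in L2 ->
  rp_inner P (fun w => a * X w + Z w) Y = a * rp_inner P X Y + rp_inner P Z Y.
Proof.
move=> X2 Z2 Y2; rewrite /rp_inner.
rewrite (_ : _ \* Y = (a \o* (X \* Y)) \+ (Z \* Y)); last first.
  by apply/funext => w /=; rewrite mulrDl -mulrA [a * _]mulrC.
have XY1 := Lfun2_mul_Lfun1 X2 Y2; have ZY1 := Lfun2_mul_Lfun1 Z2 Y2.
rewrite expectationD ?Lfun_scale // expectationZl // fineD ?fineM //.
- exact: expectation_fin_num.
- by rewrite fin_numM // expectation_fin_num.
- exact: expectation_fin_num.
Qed.

Lemma rp_innerBl X Z Y : X \in L2 -> Z \in L2 -> Y \in L2 ->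
  rp_inner P (X \- Z) Y = rp_inner P X Y - rp_inner P Z Y.
Proof.
move=> X2 Z2 Y2; rewrite (_ : X \- Z = (fun w => -1 * Z w + X w)); last first.
  by apply/funext => w /=; rewrite mulN1r addrC.
by rewrite rp_innerDl // mulN1r addrC.
Qed.

Lemma rp_innerBr X Y Z : X \in L2 -> Y \in L2 -> Z \in L2 ->
  rp_inner P X (Y \- Z) = rp_inner P X Y - rp_inner P X Z.
Proof. by move=> *; rewrite rp_innerC rp_innerBl // !(rp_innerC _ X). Qed.

Lemma rp_inner_suml (I : Type) (r : seq I) (a : I -> R) (F : I -> T -> R) Y :
  (forall i, F i \in L2) -> Y \in L2 ->
  rp_inner P (fun w => \sum_(i <- r) a i * F i w) Y =
  \sum_(i <- r) a i * rp_inner P (F i) Y.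
Proof.
move=> F2 Y2; elim: r => [|i r IH].
  by under eq_fun do rewrite big_nil; rewrite big_nil rp_inner0l.
under eq_fun do rewrite big_cons.
by rewrite rp_innerDl ?IH ?big_cons //; exact: Lfun2_sum.
Qed.

Lemma rp_inner_sumr (I : Type) (r : seq I) (a : I -> R) (F : I -> T -> R) Y :
  (forall i, F i \in L2) -> Y \in L2 ->
  rp_inner P Y (fun w => \sum_(i <- r) a i * F i w) =
  \sum_(i <- r) a i * rp_inner P Y (F i).
Proof.
move=> F2 Y2; rewrite rp_innerC rp_inner_suml //.
by apply: eq_bigr => i _; rewrite rp_innerC.
Qed.

Lemma Lfun2_sum1 (I : Type) (r : seq I) (F : I -> T -> R) :
  (forall i, F i \in L2) -> (fun w => \sum_(i <- r) F i w) \in L2.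
Proof.
move=> F2; have := @Lfun2_sum I r (fun _ => 1) F F2.
by under eq_fun do under eq_bigr do rewrite mul1r.
Qed.

Lemma rp_inner_sum1l (I : Type) (r : seq I) (F : I -> T -> R) Y :
  (forall i, F i \in L2) -> Y \in L2 ->
  rp_inner P (fun w => \sum_(i <- r) F i w) Y = \sum_(i <- r) rp_inner P (F i) Y.
Proof.
move=> F2 Y2; have := @rp_inner_suml I r (fun _ => 1) F Y F2 Y2.
under eq_fun do under eq_bigr do rewrite mul1r.
by under eq_bigr do rewrite mul1r.
Qed.

Lemma rp_inner_eq0 X : X \in L2 -> rp_inner P X X = 0 -> {ae P, forall w, X w = 0}.
Proof.
move=> X2 XX0; have XX1 := Lfun2_mul_Lfun1 X2 X2.
have E0 : ('E_P[X \* X] = 0)%E.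
  by rewrite -[LHS]fineK ?expectation_fin_num // -/(rp_inner P X X) XX0.
have /Lfun1_integrable/integrableP[mXX _] := XX1.
have : (\int[P]_(x in setT) `|(X x * X x)%:E| = 0)%E.
  rewrite -E0 unlock; apply: eq_integral => x _ /=.
  by rewrite ger0_norm // -expr2 sqr_ge0.
move/(ae_eq_integral_abs _ measurableT mXX); apply: filterS => w /= /(_ I).
by move/eqP; rewrite eqe mulf_eq0 orbb => /eqP.
Qed.

Definition L2_family (S : seq (T -> R)) := forall i : 'I_(size S), nth0 S i \in L2.

Lemma Lfun2_lincomb (S : seq (T -> R)) (c : 'I_(size S) -> R) :
  L2_family S -> rp_lincomb c \in L2.
Proof. by move=> S2; apply: Lfun2_sum. Qed.

Lemma rp_lincomb_delta (S : seq (T -> R)) (k : 'I_(size S)) :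
  rp_lincomb (fun l : 'I_(size S) => (l == k)%:R) = nth0 S k.
Proof.
apply/funext => w; rewrite /rp_lincomb (bigD1 k) //= eqxx mul1r big1 ?addr0 //.
by move=> l /negbTE ->; rewrite mul0r.
Qed.

Lemma rp_in_span_sub (S1 S2 : seq (T -> R)) (p : T -> R) :
  (forall k : 'I_(size S1), exists k' : 'I_(size S2), nth0 S1 k = nth0 S2 k') ->
  rp_in_span P S1 p -> rp_in_span P S2 p.
Proof.
move=> /choice[sg Hsg] [c Hc].
exists (fun k' => \sum_(k < size S1 | sg k == k') c k).
apply: filterS Hc => w ->; rewrite /rp_lincomb (partition_big sg xpredT) //=.
by apply: eq_bigr => k' _; rewrite mulr_suml; apply: eq_bigr => k /eqP <-; rewrite Hsg.
Qed.

(* The normal equations [G c = b] with the Gram matrix [G] of [S] are solvable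
   because every [v] in the kernel of [G] gives a combination of [S] of zero
   norm, hence orthogonal to [x]. *)
Lemma rp_proj_exists (S : seq (T -> R)) (x : T -> R) :
  L2_family S -> x \in L2 -> exists c : 'I_(size S) -> R, rp_is_proj P S x (rp_lincomb c).
Proof.
move=> S2 x2; set k := size S in S2 *.
pose G : 'M[R]_k := \matrix_(i, j) rp_inner P (nth0 S i) (nth0 S j).
pose b : 'rV[R]_k := \row_i rp_inner P x (nth0 S i).
have bG : (b <= G)%MS.
  apply: submx_of_ker => v Gv.
  pose z w := \sum_(l < k) v l 0 * nth0 S l w.
  have z2 : z \in L2 by apply: Lfun2_sum.
  have Sz (i : 'I_k) : rp_inner P (nth0 S i) z = 0.
    transitivity ((G *m v) i 0); last by rewrite Gv mxE.
    by rewrite rp_inner_sumr // mxE; apply: eq_bigr => l _; rewrite mxE mulrC.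
  have /rp_inner_eq0 z0 : rp_inner P z z = 0.
    by rewrite {1}/z rp_inner_suml //; apply: big1 => l _; rewrite Sz mulr0.
  have xz : rp_inner P x z = 0.
    by rewrite rp_innerC (rp_inner_ae _ _ _ (z0 z2)) rp_inner0l.
  apply/matrixP => i j; rewrite (ord1 i) (ord1 j) [RHS]mxE -[RHS]xz.
  by rewrite rp_inner_sumr // !mxE; apply: eq_bigr => l _; rewrite mxE mulrC.
case/submxP: bG => D bD; exists (fun i => D 0 i); split.
  by exists (fun i => D 0 i); apply: nearW.
move=> i; rewrite rp_innerBl //; last exact: Lfun2_lincomb.
rewrite /rp_lincomb rp_inner_suml //.
have := congr1 (fun M : 'rV_k => M 0 i) bD; rewrite !mxE => ->.
by apply/eqP; rewrite subr_eq0; apply/eqP/eq_bigr => l _; rewrite mxE.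
Qed.

Lemma rp_proj_unique (S : seq (T -> R)) (x p1 p2 : T -> R) :
  L2_family S -> x \in L2 -> rp_is_proj P S x p1 -> rp_is_proj P S x p2 ->
  {ae P, forall w, p1 w = p2 w}.
Proof.
move=> S2 x2 [[c1 p1E] O1] [[c2 p2E] O2].
set l1 := rp_lincomb c1; set l2 := rp_lincomb c2.
have l1_2 : l1 \in L2 by apply: Lfun2_lincomb.
have l2_2 : l2 \in L2 by apply: Lfun2_lincomb.
have Ol (l : T -> R) (p : T -> R) : {ae P, forall w, p w = l w} ->
    (forall i : 'I_(size S), rp_inner P (x \- p) (nth0 S i) = 0) ->
    forall i : 'I_(size S), rp_inner P (x \- l) (nth0 S i) = 0.
  by move=> pl Op i; rewrite -[RHS](Op i); apply: rp_inner_ae; apply: filterS pl => w /= ->.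
have Oz (i : 'I_(size S)) : rp_inner P (l2 \- l1) (nth0 S i) = 0.
  by move: (Ol _ _ p1E O1 i) (Ol _ _ p2E O2 i); rewrite !rp_innerBl //; lra.
have Ocomb (c : 'I_(size S) -> R) : rp_inner P (l2 \- l1) (rp_lincomb c) = 0.
  rewrite /rp_lincomb rp_inner_sumr ?Lfun2_sub //.
  by rewrite big1 // => k _; rewrite Oz mulr0.
have zz : rp_inner P (l2 \- l1) (l2 \- l1) = 0.
  by rewrite rp_innerBr ?Lfun2_sub // !Ocomb subrr.
apply: (filterS3 _ _ p1E p2E (rp_inner_eq0 _ (Lfun2_sub _ _ l2_2 l1_2) zz)) => w -> -> /eqP.
by rewrite subr_eq0 eq_sym => /eqP.
Qed.

(* The residual is orthogonal to [e - E[e | B]] for [e] in [E] by conditional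
   orthogonality, and to [E[e | B]] because that lies in the span of [B]. *)
Lemma rp_proj_cond_orth (A E B : seq (T -> R)) (a : 'I_(size A) -> R) (p : T -> R) :
  L2_family A -> L2_family E -> L2_family B -> p \in L2 ->
  (forall k : 'I_(size B), exists k' : 'I_(size E), nth0 B k = nth0 E k') ->
  rp_cond_orth P A E B -> rp_is_proj P B (rp_lincomb a) p ->
  rp_is_proj P E (rp_lincomb a) p.
Proof.
move=> A2 E2 B2 p2 BE AEB [pB OB]; split; first exact: rp_in_span_sub pB.
move=> k; have [cb Hcb] := rp_proj_exists _ _ B2 (E2 k).
rewrite -(rp_lincomb_delta E k) in Hcb.
have := AEB _ _ _ _ (conj pB OB) Hcb.
rewrite rp_lincomb_delta rp_innerBr ?Lfun2_sub ?Lfun2_lincomb //.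
rewrite /rp_lincomb rp_inner_sumr ?Lfun2_sub ?Lfun2_lincomb //.
by rewrite big1 ?subr0 // => l _; rewrite OB mulr0.
Qed.

End L2_inner.

Section Conjugate_regression.
Context {d0 : measure_display} {T : measurableType d0} {R : realType}.
Variable P : probability T R.
Variables (m n N : nat) (y d : int -> T -> 'cV[R]_m).
Hypothesis m_gt0 : (0 < m)%N.
Local Notation L2 := (Lfun P 2%:E).
Local Notation nth0 S i := (nth (fun _ => 0) S i).

Definition comp_pairs (ts : seq int) := [seq (u, j) | u <- ts, j <- enum 'I_m].

(* The boundary t - n, ..., t - 1, t + 1, ..., t + n of the cyclic interval
   (t - 1, t + 1), written as in [rp_reciprocal]. *)
Definition boundary (t : int) :=
  [seq (t - 1) - i%:Z | i <- iota 0 n] ++ [seq (t - 1) + (1.+1 + i)%:Z | i <- iota 0 n].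

Definition others (t : int) := [seq t + (j.+1)%:Z | j <- iota 0 N.-1].

Definition pair0 : int * 'I_m := (0, Ordinal m_gt0).
Definition bpairs := comp_pairs (boundary 0).
Definition nb := size bpairs.
Definition boff k := (nth pair0 bpairs k).1.
Definition bcomp k := (nth pair0 bpairs k).2.

Lemma rp_compsE ts : rp_comps y ts = [seq rp_comp (y p.1) p.2 | p <- comp_pairs ts].
Proof. by rewrite /rp_comps /comp_pairs map_allpairs. Qed.

Lemma mem_comp_pairs ts u j : ((u, j) \in comp_pairs ts) = (u \in ts).
Proof.
apply/idP/idP; first by case/allpairsP => -[u' j'] /= [hu _ [-> _]].
by move=> hu; apply/allpairsP; exists (u, j) => /=; rewrite mem_enum.
Qed.

Lemma boundary_shift t : boundary t = [seq u + t | u <- boundary 0].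
Proof.
by rewrite /boundary map_cat -!map_comp; congr (_ ++ _); apply: eq_map => i /=; lia.
Qed.

Lemma comp_pairs_boundary t : comp_pairs (boundary t) = [seq (p.1 + t, p.2) | p <- bpairs].
Proof. by rewrite /bpairs {1}boundary_shift /comp_pairs allpairs_mapl map_allpairs. Qed.

Lemma size_comps_boundary t : size (rp_comps y (boundary t)) = nb.
Proof. by rewrite rp_compsE size_map comp_pairs_boundary size_map. Qed.

Lemma nth_comps_boundary t k : (k < nb)%N ->
  nth0 (rp_comps y (boundary t)) k = rp_comp (y (boff k + t)) (bcomp k).
Proof.
move=> kb; rewrite rp_compsE (nth_map pair0); last by rewrite comp_pairs_boundary size_map.
by rewrite comp_pairs_boundary (nth_map pair0).
Qed.

Lemma boff_boundary k : (k < nb)%N -> boff k \in boundary 0.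
Proof.
move=> kb; rewrite /boff -(mem_comp_pairs _ _ (bcomp k)) /bcomp -surjective_pairing.
exact: mem_nth.
Qed.

Lemma boundary0P u : u \in boundary 0 -> u != 0 /\ - n%:Z <= u <= n%:Z.
Proof.
rewrite mem_cat => /orP[] /mapP[i]; rewrite mem_iota => /andP[_ ni] ->;
  by split; [apply/eqP; lia | apply/andP; split; lia].
Qed.

Lemma boffP (l : 'I_nb) : boff l != 0 /\ - n%:Z <= boff l <= n%:Z.
Proof. exact/boundary0P/boff_boundary. Qed.

Hypothesis y2 : rp_second_order P y.

Lemma Lfun2_comp u j : rp_comp (y u) j \in L2.
Proof. exact: (y2 u j).1. Qed.

Lemma L2_family_comps ts : L2_family P (rp_comps y ts).
Proof.
move=> [k /=]; rewrite rp_compsE size_map => kts.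
by rewrite (nth_map pair0) //; exact: Lfun2_comp.
Qed.

Lemma rp_inner_comp u v a b :
  rp_inner P (rp_comp (y u) a) (rp_comp (y v) b) = rp_Cov P y u v a b.
Proof. by rewrite /rp_Cov mxE. Qed.

Lemma size_comps1 t : size (rp_comps y [:: t]) = m.
Proof. by rewrite rp_compsE size_map size_allpairs size_enum_ord mul1n. Qed.

Lemma nth_comps1 t (i : 'I_m) : nth0 (rp_comps y [:: t]) i = rp_comp (y t) i.
Proof.
rewrite rp_compsE (nth_map pair0); last by rewrite size_allpairs size_enum_ord mul1n.
by rewrite /comp_pairs /= cats0 (nth_map (Ordinal m_gt0)) ?size_enum_ord // nth_ord_enum.
Qed.

Lemma boundary_proj_exists : exists c : 'I_m -> 'I_(size (rp_comps y (boundary 0))) -> R,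
  forall i, rp_is_proj P (rp_comps y (boundary 0)) (rp_comp (y 0) i) (rp_lincomb (c i)).
Proof.
have proj_i i : exists ci : 'I_(size (rp_comps y (boundary 0))) -> R,
    rp_is_proj P (rp_comps y (boundary 0)) (rp_comp (y 0) i) (rp_lincomb ci).
  by apply: rp_proj_exists; [exact: L2_family_comps | exact: Lfun2_comp].
by have [f Hf] := choice proj_i; exists f.
Qed.

Variable c : 'I_m -> 'I_(size (rp_comps y (boundary 0))) -> R.

(* [coef i] extends [c i] by 0 to all of nat, so that it can be used with the
   boundary at any time t. *)
Definition coef i k := oapp (c i) 0 (insub k).

Definition yhat t i w := \sum_(k < nb) coef i k * rp_comp (y (boff k + t)) (bcomp k) w.

Lemma yhatE t i : yhat t i = rp_lincomb (S := rp_comps y (boundary t)) (fun k => coef i k).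
Proof.
apply/funext => w; rewrite /yhat /rp_lincomb.
rewrite -(big_mkord xpredT (fun k => coef i k * rp_comp (y (boff k + t)) (bcomp k) w)).
rewrite -(big_mkord xpredT (fun k => coef i k * nth0 (rp_comps y (boundary t)) k w)).
by rewrite size_comps_boundary; apply: eq_big_nat => k /andP[_ kb]; rewrite nth_comps_boundary.
Qed.

Lemma yhat0 i : yhat 0 i = rp_lincomb (c i).
Proof.
rewrite yhatE; apply/funext => w; rewrite /rp_lincomb.
by apply: eq_bigr => k _; rewrite /coef valK.
Qed.

Lemma Lfun2_yhat t i : yhat t i \in L2.
Proof. by apply: Lfun2_sum => k; exact: Lfun2_comp. Qed.

(* Entry (i, j) of [regr_mx z] is the coefficient of the j-th component of
   y(t - z) in [yhat t i]. *)
Definition regr_mx (z : int) : 'M[R]_m :=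
  \matrix_(i, j) \sum_(l < nb | (boff l == - z) && (bcomp l == j)) coef i l.

Definition AR_mx (z : int) : 'M[R]_m := (z == 0)%:R%:M - regr_mx z.

Lemma AR_mx0 : AR_mx 0 = 1%:M.
Proof.
rewrite /AR_mx eqxx (_ : regr_mx 0 = 0) ?subr0 //.
apply/matrixP => i j; rewrite !mxE big1 // => l /andP[/eqP l0 _].
by have [] := boffP l; rewrite l0 oppr0 eqxx.
Qed.

Lemma sum_lag_delta t w (i : 'I_m) :
  (\sum_(k < (2 * n).+1) ((k%:Z - n%:Z == 0)%:R%:M *m y (t - (k%:Z - n%:Z)) w)) i 0 =
  rp_comp (y t) i w.
Proof.
have nk : (n < (2 * n).+1)%N by lia.
rewrite summxE (bigD1 (Ordinal nk)) //= subrr eqxx mul_scalar_mx scale1r subr0.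
rewrite big1 ?addr0 // => k kn; rewrite mul_scalar_mx mxE.
suff /negbTE -> : k%:Z - n%:Z != 0 by rewrite mul0r.
by apply: contra kn => /eqP kn; apply/eqP/val_inj => /=; lia.
Qed.

Lemma sum_lag_regr t w (i : 'I_m) :
  (\sum_(k < (2 * n).+1) (regr_mx (k%:Z - n%:Z) *m y (t - (k%:Z - n%:Z)) w)) i 0 =
  yhat t i w.
Proof.
rewrite summxE /yhat.
transitivity (\sum_(k < (2 * n).+1) \sum_(j < m) \sum_(l < nb)
    (if (boff l == - (k%:Z - n%:Z)) && (bcomp l == j)
     then coef i l * y (t - (k%:Z - n%:Z)) w j 0 else 0)).
  apply: eq_bigr => k _; rewrite mxE; apply: eq_bigr => j _.
  by rewrite mxE mulr_suml big_mkcond /=; apply: eq_bigr => l _; case: ifP.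
rewrite exchange_big /=; under eq_bigr do rewrite exchange_big /=.
rewrite exchange_big /=; apply: eq_bigr => l _.
have [_ /andP[l1 l2]] := boffP l.
have lk : (absz (n%:Z - boff l) < (2 * n).+1)%N by lia.
rewrite exchange_big /= (bigD1 (Ordinal lk)) //= [X in _ + X]big1 ?addr0; last first.
  move=> k kl; apply: big1 => j _; case: ifP => // /andP[/eqP lk' _].
  by case/eqP: kl; apply: val_inj => /=; lia.
rewrite (bigD1 (bcomp l)) //= [X in _ + X]big1 ?addr0; last first.
  by move=> j jl; rewrite [bcomp l == j]eq_sym (negbTE jl) andbF.
have -> : boff l == - ((absz (n%:Z - boff l))%:Z - n%:Z) by apply/eqP; lia.
rewrite eqxx /=; congr (_ * _).
by have -> : t - ((absz (n%:Z - boff l))%:Z - n%:Z) = boff l + t by lia.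
Qed.

Hypotheses (nN : (2 * n < N)%N) (yN : rp_periodic N y).

Lemma boundary_others t u : u \in boundary t ->
  exists2 j, (j < N.-1)%N & (u = t + (j.+1)%:Z \/ u + N%:Z = t + (j.+1)%:Z).
Proof.
rewrite mem_cat => /orP[] /mapP[i]; rewrite mem_iota => /andP[_ ni] ->.
  by exists (N - 2 - i)%N; [lia | right; lia].
by exists i; [lia | left; lia].
Qed.

Lemma boundary_sub_others t (k : 'I_(size (rp_comps y (boundary t)))) :
  exists k' : 'I_(size (rp_comps y (others t))),
    nth0 (rp_comps y (boundary t)) k = nth0 (rp_comps y (others t)) k'.
Proof.
case: k => k /=; rewrite size_comps_boundary => kb; rewrite nth_comps_boundary //.
have /boundary_others[j jN uj] : boff k + t \in boundary t.
  by rewrite (boundary_shift t); apply: (map_f (fun u => u + t)); exact: boff_boundary.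
set v := t + (j.+1)%:Z in uj.
have -> : y (boff k + t) = y v by case: uj => [-> //| <-]; rewrite yN.
have vk : (v, bcomp k) \in comp_pairs (others t).
  by rewrite mem_comp_pairs; apply/mapP; exists j; rewrite // mem_iota.
have vkE : (index (v, bcomp k) (comp_pairs (others t)) < size (rp_comps y (others t)))%N.
  by rewrite rp_compsE size_map index_mem.
by exists (Ordinal vkE); rewrite /= rp_compsE (nth_map pair0) ?index_mem // nth_index.
Qed.

Hypotheses (y_stat : rp_stationary P y) (c_proj :
  forall i, rp_is_proj P (rp_comps y (boundary 0)) (rp_comp (y 0) i) (rp_lincomb (c i))).

Lemma yhat_residual_inner t i k :
  rp_inner P (rp_comp (y t) i \- yhat t i) (rp_comp (y (boff k + t)) (bcomp k)) =
  rp_Cov P y 0 (boff k) i (bcomp k) -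
    \sum_(l < nb) coef i l * rp_Cov P y (boff l) (boff k) (bcomp l) (bcomp k).
Proof.
rewrite rp_innerBl ?Lfun2_comp ?Lfun2_yhat // rp_inner_suml => [|l|]; try exact: Lfun2_comp.
rewrite rp_inner_comp -{1}(add0r t) y_stat; congr (_ - _).
by apply: eq_bigr => l _; rewrite rp_inner_comp y_stat.
Qed.

Lemma yhat_proj_boundary t i :
  rp_is_proj P (rp_comps y (boundary t)) (rp_comp (y t) i) (yhat t i).
Proof.
split; first by exists (fun k => coef i k); apply: nearW => w; rewrite yhatE.
case=> k /=; rewrite size_comps_boundary => kb.
rewrite nth_comps_boundary // yhat_residual_inner -(yhat_residual_inner 0).
have kb0 : (k < size (rp_comps y (boundary 0)))%N by rewrite size_comps_boundary.
by rewrite -(@nth_comps_boundary 0 k kb) yhat0; exact: (c_proj i).2 (Ordinal kb0).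
Qed.

Hypotheses (n_gt0 : (0 < n)%N) (y_rec : rp_reciprocal P n N y).

Lemma yhat_proj_others t i :
  rp_is_proj P (rp_comps y (others t)) (rp_comp (y t) i) (yhat t i).
Proof.
have cond_orth : rp_cond_orth P (rp_comps y [:: t]) (rp_comps y (others t))
                                (rp_comps y (boundary t)).
  have -> : [:: t] = [seq (t - 1) + (i.+1)%:Z | i <- iota 0 1].
    by rewrite /=; congr [:: _]; lia.
  have -> : others t = [seq (t - 1) + (1.+1 + i)%:Z | i <- iota 0 (N - 1)].
    by rewrite /others subn1; apply: eq_map => j; lia.
  by apply: y_rec; lia.
have ti : (i < size (rp_comps y [:: t]))%N by rewrite size_comps1.
have yti : rp_comp (y t) i = rp_lincomb (fun l => (l == Ordinal ti)%:R).
  by rewrite rp_lincomb_delta /= nth_comps1.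
rewrite yti; apply: (rp_proj_cond_orth _ _ _ _ _ _ (L2_family_comps _) (L2_family_comps _)
  (L2_family_comps _) (Lfun2_yhat t i) (@boundary_sub_others t) cond_orth).
by rewrite -yti; exact: yhat_proj_boundary.
Qed.

Hypothesis yd : rp_conjugate P N y d.

Lemma yhat_conjugate t i :
  {ae P, forall w, yhat t i w = rp_comp (y t) i w - rp_comp (d t) i w}.
Proof.
apply: rp_proj_unique (yhat_proj_others t i) (yd t i).
- exact: L2_family_comps.
- exact: Lfun2_comp.
Qed.

Lemma two_sided_AR_conjugate : two_sided_AR P n N y d AR_mx.
Proof.
move=> t _; have yhat_ae : {ae P, forall w, forall i,
    yhat t i w = rp_comp (y t) i w - rp_comp (d t) i w}.
  by apply: filter_forall => i; exact: yhat_conjugate.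
apply: filterS yhat_ae => w yhat_ae; apply/matrixP => i j; rewrite (ord1 j).
under eq_bigr do rewrite /AR_mx mulmxBl.
rewrite sumrB mxE [X in _ + X]mxE sum_lag_delta sum_lag_regr yhat_ae.
by rewrite opprB addrC subrK.
Qed.

End Conjugate_regression.

Section Uniqueness.
Context {d0 : measure_display} {T : measurableType d0} {R : realType}.
Variable P : probability T R.
Variables (m n N : nat) (y : int -> T -> 'cV[R]_m).
Hypotheses (nN : (2 * n < N)%N) (y2 : rp_second_order P y) (yN : rp_periodic N y).
Local Notation L2 := (Lfun P 2%:E).

Definition ycomb (xs : 'I_N -> 'rV[R]_m) : T -> R :=
  fun w => \sum_(s < N) \sum_(a < m) xs s 0 a * rp_comp (y (s.+1)%:Z) a w.

Lemma SigmaN_quad_form (xs : 'I_N -> 'rV[R]_m) :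
  ((\mxrow_s xs s) *m rp_SigmaN P N y *m (\mxrow_s xs s)^T) 0 0 =
  rp_inner P (ycomb xs) (ycomb xs).
Proof.
have comp2 u a : rp_comp (y u) a \in L2 by exact: (y2 u a).1.
have term2 (s : 'I_N) (ws : 'rV[R]_m) :
    (fun w => \sum_(a < m) ws 0 a * rp_comp (y (s.+1)%:Z) a w) \in L2.
  by apply: Lfun2_sum => a.
have ycomb2 : ycomb xs \in L2 by apply: Lfun2_sum1 => s.
rewrite /rp_SigmaN mul_mxrow_mxblock tr_mxrow mul_mxrow_mxcol summxE.
rewrite {1}/ycomb rp_inner_sum1l //.
apply: eq_bigr => s _; rewrite rp_innerC rp_inner_sum1l //.
rewrite mulmx_suml summxE; apply: eq_bigr => r _.
rewrite rp_inner_suml // mxE.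
under eq_bigr do rewrite mxE mulr_suml.
rewrite exchange_big; apply: eq_bigr => a _ /=.
rewrite rp_inner_sumr // mulr_sumr; apply: eq_bigr => b _.
by rewrite !mxE; ring.
Qed.

(* Slot s of [ycomb] holds time s + 1, and the equation at t = 1 involves
   time 1 - (k - n); hence slot (n - k) mod N. *)
Definition lag_index (k : nat) : nat := if (k <= n)%N then (n - k)%N else (n + N - k)%N.

Lemma lag_index_lt (k : 'I_(2 * n).+1) : (lag_index k < N)%N.
Proof. by have := ltn_ord k; rewrite /lag_index; case: ifP; lia. Qed.

Definition lag_slot (k : 'I_(2 * n).+1) : 'I_N := Ordinal (lag_index_lt k).

Lemma lag_slot_inj : injective lag_slot.
Proof.
move=> k1 k2 /(congr1 val) /=; rewrite /lag_index => k12; apply/val_inj => /=.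
by have := ltn_ord k1; have := ltn_ord k2; move: k12; case: ifP; case: ifP; lia.
Qed.

Lemma y_lag_slot (k : 'I_(2 * n).+1) : y ((lag_slot k).+1)%:Z = y (1 - (k%:Z - n%:Z)).
Proof.
rewrite /= /lag_index; case: ifP => kn; first by congr y; lia.
by rewrite -[RHS]yN; congr y; have := ltn_ord k; lia.
Qed.

(* Row [i0] of the coefficients [H], arranged by the time slot it multiplies
   in the equation at t = 1. *)
Definition lag_row (H : int -> 'M[R]_m) (i0 : 'I_m) (s : 'I_N) : 'rV[R]_m :=
  \row_a \sum_(k < (2 * n).+1 | lag_slot k == s) H (k%:Z - n%:Z) i0 a.

Lemma ycomb_lag_row H i0 w :
  ycomb (lag_row H i0) w =
  (\sum_(k < (2 * n).+1) H (k%:Z - n%:Z) *m y (1 - (k%:Z - n%:Z)) w) i0 0.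
Proof.
rewrite summxE /ycomb (partition_big lag_slot xpredT) //=; apply: eq_bigr => s _.
under eq_bigr do rewrite mxE mulr_suml.
rewrite exchange_big /=; apply: eq_bigr => k /eqP <-; rewrite mxE.
by apply: eq_bigr => a _; rewrite y_lag_slot.
Qed.

Lemma lag_row_eq0 H i0 (k : 'I_(2 * n).+1) a :
  \mxrow_s lag_row H i0 s = 0 -> H (k%:Z - n%:Z) i0 a = 0.
Proof.
move=> /(congr1 (fun M => submxrow M (lag_slot k))); rewrite mxrowK => Hk.
have := congr1 (fun r : 'rV[R]_m => r 0 a) Hk.
rewrite !mxE (big_pred1 k) => [-> //|k'].
by rewrite /= (inj_eq lag_slot_inj).
Qed.

Lemma two_sided_AR_unique (d : int -> T -> 'cV[R]_m) (F G : int -> 'M[R]_m) :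
  rp_posdef (rp_SigmaN P N y) ->
  two_sided_AR P n N y d F -> two_sided_AR P n N y d G ->
  forall k : int, - n%:Z <= k <= n%:Z -> F k = G k.
Proof.
move=> Sigma_pd FAR GAR z /andP[z1 z2].
have t1 : (1 : int) <= 1 <= N%:Z by apply/andP; split; lia.
apply/eqP; rewrite -subr_eq0; apply/eqP/matrixP => i0 j0.
pose H u := F u - G u.
have Hrow0 : \mxrow_s lag_row H i0 s = 0.
  apply/eqP/contraT => /Sigma_pd; rewrite SigmaN_quad_form.
  have ycomb0 : {ae P, forall w, ycomb (lag_row H i0) w = 0}.
    apply: filterS2 (FAR 1 t1) (GAR 1 t1) => w FE GE.
    rewrite ycomb_lag_row; under eq_bigr do rewrite mulmxBl.
    by rewrite sumrB FE GE subrr mxE.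
  by rewrite (rp_inner_ae _ _ _ _ ycomb0) rp_inner0l ltxx.
have zk : (absz (z + n%:Z)%R < (2 * n).+1)%N by lia.
have := @lag_row_eq0 H i0 (Ordinal zk) j0 Hrow0.
have -> : (Ordinal zk)%:Z - n%:Z = z by rewrite /=; lia.
by rewrite !mxE.
Qed.

End Uniqueness.

Theorem theorem1 (R : realType) (d0 : measure_display) (T : measurableType d0)
    (P : probability T R) (m n N : nat)
    (y d : int -> T -> 'cV[R]_m) :
  (1 <= m)%N -> (1 <= n)%N -> (2 * n < N)%N ->
  rp_second_order P y -> rp_periodic N y -> rp_stationary P y ->
  rp_reciprocal P n N y -> rp_conjugate P N y d ->
  (exists F : int -> 'M[R]_m, F 0 = 1%:M /\ two_sided_AR P n N y d F) /\
  (rp_posdef (rp_SigmaN P N y) ->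
   forall F G : int -> 'M[R]_m,
     F 0 = 1%:M -> two_sided_AR P n N y d F ->
     G 0 = 1%:M -> two_sided_AR P n N y d G ->
     forall k : int, - n%:Z <= k <= n%:Z -> F k = G k).
Proof.
move=> m_gt0 n_gt0 nN y2 yN y_stat y_rec yd; split.
  have [c c_proj] := boundary_proj_exists P m n y m_gt0 y2.
  exists (AR_mx _ _ _ m_gt0 c); split; first exact: AR_mx0.
  exact: two_sided_AR_conjugate.
move=> Sigma_pd F G _ FAR _ GAR.
exact: two_sided_AR_unique FAR GAR.
Qed.
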